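(* Let $f$ be an $n$-variable Boolean function with $f\neq\delta_0$ and $f^c\neq\delta_0$. Then $|{FAI}(f^c)-{FAI}(f)|\le 2$.
   Context: An $n$-variable Boolean function is a map $\mathbb{F}_2^n\to\mathbb{F}_2$, with algebraic degree $\deg$ the degree of its algebraic normal form (ANF). $\delta_0$ is the indicator function of $\{0\}\subseteq\mathbb{F}_2^n$. The algebraic complement $f^c$ of $f$ is the function whose ANF consists of exactly the monomials $\prod_{i\in I}x_i$, $I\subseteq\{1,\dots,n\}$, that do not appear in the ANF of $f$; equivalently $f^c=f+\delta_0$. ${AN}^c(f)$ is the set of $g$ with $f\cdot g\neq0$, and ${FAI}(f)$ is the minimum of $\deg(g)+\deg(f\cdot g)$ over $g\in{AN}^c(f)$, $g\neq 1$. *)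

From mathcomp Require Import all_boot.
Set Implicit Arguments. Unset Strict Implicit. Unset Printing Implicit Defensive.

Definition BV (n : nat) := {ffun 'I_n -> bool}.

Definition BF (n : nat) := {ffun BV n -> bool}.

Definition supp n (x : BV n) : {set 'I_n} := [set i | x i].

(* ANF coefficient of the monomial prod_{i in I} x_i (Moebius transform):
   a_I = sum_{x : supp x \subset I} f(x) over F_2. *)
Definition anf n (f : BF n) (I : {set 'I_n}) : bool :=
  \big[addb/false]_(x : BV n | supp x \subset I) f x.

(* Algebraic degree: largest size of a monomial occurring in the ANF
   (0 for the zero function). *)
Definition deg n (f : BF n) : nat := \max_(I : {set 'I_n} | anf f I) #|I|.

Definition bfmul n (f g : BF n) : BF n := [ffun x => f x && g x].
Definition bfadd n (f g : BF n) : BF n := [ffun x => addb (f x) (g x)].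
Definition bf0 n : BF n := [ffun _ => false].
Definition bf1 n : BF n := [ffun _ => true].

Definition delta0 n : BF n := [ffun x => x == [ffun _ => false]].

Definition fcompl n (f : BF n) : BF n := bfadd f (delta0 n).

Definition inANc n (f g : BF n) : bool := bfmul f g != bf0 n.

(* FAI(f) = min { deg g + deg (f g) : g in AN^c(f), g <> 1 }.
   The default value 2n+1 of the fold is only returned if the set is empty
   (every admissible value is <= 2n). *)
Definition FAI n (f : BF n) : nat :=
  \big[minn/(n.*2).+1]_(g : BF n | inANc f g && (g != bf1 n))
     (deg g + deg (bfmul f g)).

From mathcomp Require Import all_boot order.
Set Implicit Arguments. Unset Strict Implicit. Unset Printing Implicit Defensive.
Import Order.TTheory.

(* The functions f and f^c = f + delta_0 agree away from 0, so f g = f^c g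
   whenever g(0) = 0.  Fix a nonzero point y of the support of f (it exists
   as neither f nor f^c is delta_0) and let g be admissible for f.  If
   g(0) = 0, g is admissible for f^c at the same cost.  If f g has a nonzero
   point z, pick z_i = 1: then g x_i vanishes at 0, f^c g x_i = f g x_i
   keeps z, and multiplying by x_i raises each degree by at most one.
   Otherwise f g = delta_0 has degree n, while with y_i = 1 the coordinate
   x_i costs deg x_i + deg (f^c x_i) <= 1 + n.  Since f^c has the same
   nonzero support as f, the same bound holds with f and f^c exchanged. *)

Lemma bigmin_le_shift (I : finType) (P Q : pred I) (F G : I -> nat) (x k : nat) :
  (forall i, P i -> exists2 j, Q j & G j <= F i + k) ->
  \big[minn/x]_(j | Q j) G j <= \big[minn/x]_(i | P i) F i + k.
Proof.
move=> PQ; rewrite (big_morph (addn^~ k) (fun a b => addn_minl a b k) erefl).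
apply/(@bigmin_geP _ nat); split=> [|i /PQ [j Qj le_Gj]].
  by apply: leq_trans (leq_addr k x); exact: (@bigmin_le_id _ nat).
exact: (@bigmin_inf _ nat _ _ j) le_Gj.
Qed.

Section BooleanFunctions.
Variable n : nat.
Implicit Types (f g h : BF n) (x y z : BV n) (I : {set 'I_n}).

Definition bv0 : BV n := [ffun _ => false].
Definition coord (i : 'I_n) : BF n := [ffun x : BV n => x i].
Definition flip (j : 'I_n) x : BV n := [ffun k => if k == j then ~~ x k else x k].

Lemma deg_leP h d : reflect (forall I, anf h I -> #|I| <= d) (deg h <= d).
Proof. exact: bigmax_leqP. Qed.

Lemma anf_deg h I : anf h I -> #|I| <= deg h.
Proof. exact: leq_bigmax_cond. Qed.

Lemma deg_leqn h : deg h <= n.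
Proof. by apply/deg_leP => I _; rewrite -[X in _ <= X]card_ord max_card. Qed.

Lemma flipK j : involutive (flip j).
Proof.
by move=> x; apply/ffunP => k; rewrite !ffunE; case: eqP => // _; apply: negbK.
Qed.

Lemma supp_flip j I x : j \in I -> (supp (flip j x) \subset I) = (supp x \subset I).
Proof.
move=> jI; apply/subsetP/subsetP => sub k; move: (sub k);
  by rewrite !inE !ffunE; case: eqP => [->|].
Qed.

Lemma anf_flip_invariant h I j :
  j \in I -> (forall x, h (flip j x) = h x) -> anf h I = false.
Proof.
move=> jI hflip; rewrite /anf (bigID (fun x : BV n => x j)) /=.
suff -> : \big[addb/false]_(x | (supp x \subset I) && x j) h x =
          \big[addb/false]_(x | (supp x \subset I) && ~~ x j) h x by rewrite addbb.
(* flip j exchanges the two halves of the sum *)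
rewrite (reindex_inj (inv_inj (flipK j))) /=; apply: eq_big => x.
  by rewrite supp_flip // ffunE eqxx.
by rewrite hflip.
Qed.

Lemma deg_bf1 : deg (bf1 n) = 0.
Proof.
apply/eqP; rewrite -leqn0; apply/deg_leP => I.
have [-> _|[j jI]] := set_0Vmem I; first by rewrite cards0.
by rewrite (@anf_flip_invariant _ _ j) // => x; rewrite !ffunE.
Qed.

Lemma supp_subD1 I i x : (supp x \subset I :\ i) = (supp x \subset I) && ~~ x i.
Proof.
apply/subsetP/andP => [sub|[/subsetP sub xi0] k].
  split; first by apply/subsetP => k /sub; rewrite inE => /andP[].
  by apply/negP => xi1; have := sub i; rewrite !inE eqxx xi1 => /(_ isT).
by rewrite !inE => xk; rewrite sub ?inE // andbT; apply: contraNneq xi0 => <-.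
Qed.

Lemma anf_mul_coord h I i :
  anf (bfmul h (coord i)) I = (i \in I) && (anf h I (+) anf h (I :\ i)).
Proof.
rewrite /anf; have [iI|iNI] /= := boolP (i \in I); last first.
  apply: big1 => x /subsetP sub; rewrite !ffunE; apply/andP => -[_ xi1].
  by move: (sub i); rewrite inE xi1 (negbTE iNI) => /(_ isT).
rewrite (bigID (fun x : BV n => x i)) [in RHS](bigID (fun x : BV n => x i)) /=.
rewrite [X in _ (+) X = _]big1 => [|x /andP[_ /negbTE xi0]]; last first.
  by rewrite !ffunE xi0 andbF.
rewrite (eq_bigl _ _ (supp_subD1 I i)) addbF -addbA addbb addbF.
by apply: eq_bigr => x /andP[_ xi1]; rewrite !ffunE xi1 andbT.
Qed.

Lemma deg_mul_coord h i : deg (bfmul h (coord i)) <= (deg h).+1.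
Proof.
apply/deg_leP => I; rewrite anf_mul_coord => /andP[iI].
have [hI _|_ /= hID1] := boolP (anf h I); first exact: leqW (anf_deg hI).
by rewrite (cardsD1 i I) iI ltnS anf_deg.
Qed.

Lemma deg_coord i : deg (coord i) <= 1.
Proof.
have -> : coord i = bfmul (bf1 n) (coord i) by apply/ffunP => x; rewrite !ffunE.
by apply: leq_trans (deg_mul_coord _ _) _; rewrite deg_bf1.
Qed.

Lemma deg_delta0 : deg (delta0 n) = n.
Proof.
apply/anti_leq; rewrite deg_leqn -{1}[n]card_ord -cardsT anf_deg //.
rewrite /anf (bigD1 bv0) ?subsetT //= ffunE eqxx big1 // => x /andP[_].
by rewrite ffunE => /negbTE.
Qed.

Lemma bv_neq0 y : y != bv0 -> exists i, y i.
Proof.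
move=> y0; apply/existsP; apply: contraR y0; rewrite negb_exists => /forallP y0.
by apply/eqP/ffunP => k; rewrite ffunE; apply/negbTE.
Qed.

Lemma eq_delta0 h : h bv0 -> (forall z, z != bv0 -> ~~ h z) -> h = delta0 n.
Proof.
move=> h0 hz; apply/ffunP => x; rewrite ffunE.
by have [->|/hz/negbTE] := eqVneq x bv0.
Qed.

Lemma fcomplK f : fcompl (fcompl f) = f.
Proof. by apply/ffunP => x; rewrite !ffunE -addbA addbb addbF. Qed.

Lemma fcompl_neq0 f y : y != bv0 -> fcompl f y = f y.
Proof. by move=> /negbTE y0; rewrite !ffunE y0 addbF. Qed.

Lemma mul_fcompl f g : g bv0 = false -> bfmul (fcompl f) g = bfmul f g.
Proof.
move=> g0; apply/ffunP => x; rewrite !ffunE.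
by have [->|x0] := eqVneq x bv0; rewrite ?g0 ?andbF ?addbF.
Qed.

Lemma inANc_fcompl f g : g bv0 = false -> inANc (fcompl f) g = inANc f g.
Proof. by move=> g0; rewrite /inANc mul_fcompl. Qed.

Lemma inANcP f g : reflect (exists z, f z && g z) (inANc f g).
Proof.
apply: (iffP idP) => [fg|[z fgz]]; last first.
  by apply/eqP => /ffunP /(_ z); rewrite !ffunE fgz.
apply/existsP; apply: contraR fg; rewrite negb_exists => /forallP fg.
by apply/eqP/ffunP => z; rewrite !ffunE; apply/negbTE.
Qed.

Lemma neq_bf1 g : g bv0 = false -> g != bf1 n.
Proof. by move=> g0; apply/eqP => /ffunP /(_ bv0); rewrite g0 ffunE. Qed.

Lemma exists_support_neq0 f :
  f != delta0 n -> fcompl f != delta0 n -> exists2 y, y != bv0 & f y.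
Proof.
move=> f_neq fc_neq.
have [/existsP[y /andP[]]|] := boolP [exists y, (y != bv0) && f y].
  by exists y.
rewrite negb_exists => /forallP fz.
have [f0|f0] := boolP (f bv0).
  by case/eqP: f_neq; apply: eq_delta0 => // z z0; have := fz z; rewrite z0.
case/eqP: fc_neq; apply: eq_delta0 => [|z z0].
  by rewrite !ffunE (negbTE f0) eqxx.
by rewrite fcompl_neq0 //; have := fz z; rewrite z0.
Qed.

Section ComplementStep.
Variables (f : BF n) (y : BV n).
Hypotheses (y0 : y != bv0) (fy : f y).

Lemma FAI_compl_step g : inANc f g -> g != bf1 n ->
  exists2 g', inANc (fcompl f) g' && (g' != bf1 n)
    & deg g' + deg (bfmul (fcompl f) g') <= deg g + deg (bfmul f g) + 2.
Proof.
move=> fg g1; have [_|/negPf g0] := boolP (g bv0); last first.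
  by exists g; rewrite ?inANc_fcompl ?mul_fcompl ?g1 ?fg ?leq_addr.
have [/existsP[z /andP[z0 fgz]]|] := boolP [exists z, (z != bv0) && (f z && g z)].
  have [i zi] := bv_neq0 z0.
  have gi0 : bfmul g (coord i) bv0 = false by rewrite !ffunE andbF.
  have mulA : bfmul f (bfmul g (coord i)) = bfmul (bfmul f g) (coord i).
    by apply/ffunP => x; rewrite !ffunE andbA.
  exists (bfmul g (coord i)).
    rewrite inANc_fcompl // neq_bf1 // andbT.
    by apply/inANcP; exists z; rewrite !ffunE zi andbT.
  by rewrite mul_fcompl // mulA addn2 -addnS -addSn leq_add ?deg_mul_coord.
rewrite negb_exists => /forallP fgz.
have fg_delta0 : bfmul f g = delta0 n.
  have [z] := inANcP _ _ fg; have [-> fgz0|z0] := eqVneq z bv0; last first.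
    by have := fgz z; rewrite z0 => /negP.
  by apply: eq_delta0 => [|x x0]; rewrite ?ffunE //; have := fgz x; rewrite x0.
have [i yi] := bv_neq0 y0.
have coord0 : coord i bv0 = false by rewrite !ffunE.
exists (coord i).
  rewrite inANc_fcompl // neq_bf1 // andbT.
  by apply/inANcP; exists y; rewrite !ffunE fy.
rewrite mul_fcompl // fg_delta0 deg_delta0.
apply: leq_trans (leq_add (deg_coord i) (deg_leqn _)) _.
by rewrite add1n addn2 ltnS leqW // leq_addl.
Qed.

Lemma FAI_compl_le : FAI (fcompl f) <= FAI f + 2.
Proof. by apply: bigmin_le_shift => g /andP[]; apply: FAI_compl_step. Qed.

End ComplementStep.
End BooleanFunctions.

Theorem proposition13 (n : nat) (f : BF n) :
  f != delta0 n -> fcompl f != delta0 n ->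
  (FAI (fcompl f) <= FAI f + 2) /\ (FAI f <= FAI (fcompl f) + 2).
Proof.
move=> f_neq fc_neq; have [y y0 fy] := exists_support_neq0 f_neq fc_neq.
split; first exact: FAI_compl_le y0 fy.
rewrite -{1}(fcomplK f); apply: (FAI_compl_le y0).
by rewrite fcompl_neq0.
Qed.
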